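(* Let $(q_i,k_i,v_i)_{i=1}^n$ be vectors in $\mathbb{R}^d$, $A_{ij}=\exp(\langle q_i,k_j\rangle/\sqrt d)$, $V\in\mathbb{R}^{n\times d}$ with rows $v_i^\top$, $v_{\max}=\|V\|_{\max}$, $\tilde k_i=k_i/d^{1/4}$, $\tilde v_i=(v_i,v_{\max})\in\mathbb{R}^{d+1}$, $\tilde q_i=q_i/d^{1/4}$, and let $\mathcal{X}_{\mathrm{in}}=\{(\tilde k_i,\tilde v_i)\}_{i=1}^n$ with $\mathcal{X}_{\mathrm{out}}$ indexed by $I_{\mathrm{out}}\subseteq[n]$, $|I_{\mathrm{out}}|=n_{\mathrm{out}}\ge1$. Let $\hat A=\frac{n}{n_{\mathrm{out}}}(A_{ij}\mathbf{1}\{j\in I_{\mathrm{out}}\})_{i,j}$. Define the query points $z_{ij}:=(\tilde q_i,e_j^{d+1})$ for $i\in[n],j\in[d+1]$ ($e_j^{d+1}$ the $j$-th standard basis vector of $\mathbb{R}^{d+1}$), and the kernel $\mathbf{k}_{\mathrm{att}}((\tilde k,\tilde v),(\tilde k',\tilde v'))=\exp(\langle\tilde k,\tilde k'\rangle)\langle\tilde v,\tilde v'\rangle$. Then $$\max\Big(\frac1n\|(\hat A-A)V\|_{\max},\ \frac1n\|(\hat A-A)\mathbf{1}_n\|_\infty\|V\|_{\max}\Big)=\max_{i\in[n],\,j\in[d+1]}\Big|\sum_{l=1}^n\mathbf{k}_{\mathrm{att}}\big(z_{ij},(\tilde k_l,\tilde v_l)\big)\Big(\frac1n-\frac{\mathbf{1}\{l\in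 I_{\mathrm{out}}\}}{n_{\mathrm{out}}}\Big)\Big|.$$ Equivalently, with the universe $\mathcal{X}=\mathcal{X}'\cup\mathcal{X}_{\mathrm{in}}$ where $\mathcal{X}'=\{z_{ij}\}$ occupies the indices $\mathcal{I}=[n(d+1)]$, and $K_{\mathrm{att}}=\mathbf{k}_{\mathrm{att}}(\mathcal{X},\mathcal{X})$, the left-hand side equals the kernel max seminorm $\|K_{\mathrm{att}}(p_{\mathrm{in}}-q_{\mathrm{out}})\|_{\mathcal{I}}=\max_{i\in\mathcal{I}}|e_i^\top K_{\mathrm{att}}(p_{\mathrm{in}}-q_{\mathrm{out}})|$.
   Context: $\|M\|_{\max}$ is the largest absolute entry of a matrix, $\|\cdot\|_\infty$ the largest absolute entry of a vector. $p_{\mathrm{in}}$ and $q_{\mathrm{out}}$ are the uniform probability vectors on $\mathcal{X}_{\mathrm{in}}$ and $\mathcal{X}_{\mathrm{out}}$ within the universe $\mathcal{X}$ (zero on $\mathcal{X}'$). *)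

From HB Require Import structures.
From mathcomp Require Import all_boot all_order all_algebra.
From mathcomp Require Import reals sequences.
Set Implicit Arguments. Unset Strict Implicit. Unset Printing Implicit Defensive.
Import Order.TTheory GRing.Theory Num.Theory.
Local Open Scope ring_scope.

Section AttDefs.
Variable R : realType.

Definition dotr m (u w : 'rV[R]_m) : R := \sum_(i < m) u 0 i * w 0 i.

(* ||M||_max : largest absolute entry (0 for an empty matrix). *)
Definition mxmax m p (M : 'M[R]_(m, p)) : R :=
  \big[Num.max/0]_(i < m) \big[Num.max/0]_(j < p) `|M i j|.

Variables (n d : nat) (q k v : 'I_n -> 'rV[R]_d) (Iout : {set 'I_n}).

Definition nout : nat := #|Iout|.

Definition attA : 'M[R]_n :=
  \matrix_(i, j) expR (dotr (q i) (k j) / Num.sqrt (d%:R)).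

Definition attV : 'M[R]_(n, d) := \matrix_(i, j) v i 0 j.

Definition vmax : R := mxmax attV.

Definition attAhat : 'M[R]_n :=
  ((n%:R / (nout%:R)) : R) *: \matrix_(i, j) (attA i j * (j \in Iout)%:R).

Definition fourth_root_d : R := Num.sqrt (Num.sqrt (d%:R)).

Definition ktil (l : 'I_n) : 'rV[R]_d := fourth_root_d^-1 *: k l.
Definition qtil (i : 'I_n) : 'rV[R]_d := fourth_root_d^-1 *: q i.
Definition vtil (l : 'I_n) : 'rV[R]_(d + 1) := row_mx (v l) (const_mx vmax).

Definition ebasis (j : 'I_(d + 1)) : 'rV[R]_(d + 1) := delta_mx 0 j.

Definition zpt (i : 'I_n) (j : 'I_(d + 1)) : 'rV[R]_d * 'rV[R]_(d + 1) :=
  (qtil i, ebasis j).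

(* universe X = X' u X_in, X' = {z_ij} occupying the first n(d+1) indices *)
Definition Npts : nat := (n * (d + 1) + n)%N.

Definition Xpt (a : 'I_Npts) : 'rV[R]_d * 'rV[R]_(d + 1) :=
  match split a with
  | inl b => let p := enum_val (cast_ord (esym (mxvec_cast n (d + 1))) b) in
             zpt p.1 p.2
  | inr l => (ktil l, vtil l)
  end.

Definition p_in : 'cV[R]_Npts :=
  \col_a (match split a with inl _ => 0 | inr _ => 1 / n%:R end).
Definition q_out : 'cV[R]_Npts :=
  \col_a (match split a with inl _ => 0 | inr l => (l \in Iout)%:R / (nout%:R) end).

End AttDefs.

Definition katt (R : realType) (d : nat) (x y : 'rV[R]_d * 'rV[R]_(d + 1)) : R :=
  expR (dotr x.1 y.1) * dotr x.2 y.2.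

Definition Katt (R : realType) n d (q k v : 'I_n -> 'rV[R]_d) : 'M[R]_(Npts n d) :=
  \matrix_(a, b) katt (Xpt q k v a) (Xpt q k v b).

Definition kernel_seminorm (R : realType) N (K : 'M[R]_N) (x : 'cV[R]_N) (I : pred 'I_N) : R :=
  \big[Num.max/0]_(a < N | I a) `|((delta_mx a (0 : 'I_1))^T *m K *m x) 0 0|.

(* The query point z_ij = (q~_i, e_j) reads off, through e_j, the j-th coordinate of the
   augmented value vector v~_l = (v_l, v_max), while exp <q~_i, k~_l> = A_il.  Hence the
   kernel sum at z_ij is the (i, j) entry of -(1/n) (Â - A) [V | v_max 1].  The max norm of
   this block matrix is the larger of the max norms of its two blocks, which are the two
   terms of the left-hand side; the kernel seminorm is the same maximum, with the query
   points listed in mxvec order. *)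

From HB Require Import structures.
From mathcomp Require Import all_boot all_order all_algebra.
From mathcomp Require Import reals sequences.
From mathcomp Require Import ring.
Import Order.TTheory GRing.Theory Num.Theory.
Local Open Scope ring_scope.

Lemma bigmax_split_ord disp (T : orderType disp) (x : T) m1 m2
    (P : pred 'I_(m1 + m2)) (F : 'I_(m1 + m2) -> T) :
  \big[Order.max/x]_(i | P i) F i =
  Order.max (\big[Order.max/x]_(i | P (lshift m2 i)) F (lshift m2 i))
            (\big[Order.max/x]_(i | P (rshift m1 i)) F (rshift m1 i)).
Proof.
have -> : index_enum 'I_(m1 + m2) =
    map (lshift m2) (index_enum 'I_m1) ++ map (@rshift m1 m2) (index_enum 'I_m2).
  apply: (inj_map val_inj); rewrite map_cat -!map_comp (map_comp (addn m1)) /=.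
  by rewrite ![index_enum _]unlock unlock !val_ord_enum -iotaDl addn0 iotaD.
rewrite big_cat_idem; last exact: maxxx.
by rewrite (big_map (lshift m2)) (big_map (@rshift m1 m2)).
Qed.

Lemma mulr_bigmax (R : realDomainType) (I : Type) (r : seq I) (P : pred I) (F : I -> R) c :
  0 <= c -> c * \big[Num.max/0]_(i <- r | P i) F i = \big[Num.max/0]_(i <- r | P i) (c * F i).
Proof.
move=> c_ge0; apply: (big_ind2 (fun a b => c * a = b)) => //; first by rewrite mulr0.
by move=> a1 a2 b1 b2 <- <-; rewrite maxr_pMr.
Qed.

Section MaxNorm.
Variable R : realType.

Lemma mxmax_ge0 m p (M : 'M[R]_(m, p)) : 0 <= mxmax M.
Proof. exact: bigmax_ge_id. Qed.

Lemma mxmaxZ m p (c : R) (M : 'M[R]_(m, p)) : mxmax (c *: M) = `|c| * mxmax M.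
Proof.
rewrite /mxmax mulr_bigmax //; apply: eq_bigr => i _.
by rewrite mulr_bigmax //; apply: eq_bigr => j _; rewrite mxE normrM.
Qed.

Lemma mxmax_row_mx m p1 p2 (X : 'M[R]_(m, p1)) (Y : 'M[R]_(m, p2)) :
  mxmax (row_mx X Y) = Num.max (mxmax X) (mxmax Y).
Proof.
rewrite /mxmax -bigmax_split; apply: eq_bigr => i _.
by rewrite bigmax_split_ord; congr Num.max; apply: eq_bigr => j _;
  rewrite (row_mxEl, row_mxEr).
Qed.

End MaxNorm.

Section Attention.
Variable R : realType.

Lemma dotr_deltal m (j : 'I_m) (w : 'rV[R]_m) : dotr (delta_mx 0 j) w = w 0 j.
Proof.
rewrite /dotr (bigD1 j) //= mxE !eqxx mul1r big1 ?addr0 // => i /negbTE neq_ij.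
by rewrite mxE neq_ij andbF mul0r.
Qed.

Lemma dotrZ m (a b : R) (u w : 'rV[R]_m) : dotr (a *: u) (b *: w) = a * b * dotr u w.
Proof. by rewrite /dotr mulr_sumr; apply: eq_bigr => i _; rewrite !mxE mulrACA. Qed.

Variables (n d : nat) (q k v : 'I_n -> 'rV[R]_d) (Iout : {set 'I_n}).
Hypothesis card_Iout_gt0 : (0 < #|Iout|)%N.

Definition attVtil : 'M[R]_(n, d + 1) := row_mx (attV v) (const_mx (vmax v)).

Lemma vtilE l j : vtil v l 0 j = attVtil l j.
Proof. by rewrite !mxE; case: split => j'; rewrite !mxE. Qed.

Lemma expR_dotr_tilde i l : expR (dotr (qtil q i) (ktil k l)) = attA q k i l.
Proof.
rewrite dotrZ -invfM -expr2 /fourth_root_d sqr_sqrtr ?sqrtr_ge0 // mxE.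
by rewrite mulrC.
Qed.

Lemma katt_query i j l :
  katt (zpt q i j) (ktil k l, vtil v l) = attA q k i l * attVtil l j.
Proof. by rewrite /katt /= expR_dotr_tilde dotr_deltal vtilE. Qed.

Lemma sum_katt_query i j :
  \sum_(l < n) katt (zpt q i j) (ktil k l, vtil v l)
                 * (n%:R^-1 - (l \in Iout)%:R / #|Iout|%:R) =
  - n%:R^-1 * ((attAhat q k Iout - attA q k) *m attVtil) i j.
Proof.
have n_neq0 : n%:R != 0 :> R.
  rewrite pnatr_eq0 -lt0n (leq_trans card_Iout_gt0) //.
  by rewrite (leq_trans (max_card _)) ?card_ord.
have out_neq0 : #|Iout|%:R != 0 :> R by rewrite pnatr_eq0 -lt0n.
rewrite !mxE mulr_sumr; apply: eq_bigr => l _.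
by rewrite katt_query !mxE /nout; field; rewrite n_neq0 out_neq0.
Qed.

Lemma mxmax_mul_attVtil m (M : 'M[R]_(m, n)) :
  mxmax (M *m attVtil) =
  Num.max (mxmax (M *m attV v)) (mxmax (M *m const_mx 1 : 'cV_m) * vmax v).
Proof.
rewrite /attVtil mul_mx_row mxmax_row_mx.
have -> : const_mx (vmax v) = vmax v *: const_mx 1 :> 'M_(n, 1).
  by apply/matrixP => i j; rewrite !mxE mulr1.
by rewrite -scalemxAr mxmaxZ ger0_norm ?mxmax_ge0 // mulrC.
Qed.

Lemma bigmax_sum_katt_query :
  \big[Num.max/0]_(i < n) \big[Num.max/0]_(j < d + 1)
     `| \sum_(l < n) katt (zpt q i j) (ktil k l, vtil v l)
                 * (n%:R^-1 - (l \in Iout)%:R / #|Iout|%:R) | =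
  n%:R^-1 * mxmax ((attAhat q k Iout - attA q k) *m attVtil).
Proof.
have -> : n%:R^-1 * mxmax ((attAhat q k Iout - attA q k) *m attVtil) =
           mxmax (- n%:R^-1 *: ((attAhat q k Iout - attA q k) *m attVtil)).
  by rewrite mxmaxZ normrN ger0_norm ?invr_ge0 ?ler0n.
rewrite /mxmax; apply: eq_bigr => i _; apply: eq_bigr => j _.
by rewrite sum_katt_query [in RHS]mxE.
Qed.

Lemma Xpt_query i j : Xpt q k v (lshift n (mxvec_index i j)) = zpt q i j.
Proof. by rewrite /Xpt (unsplitK (inl _)) cast_ordK enum_rankK. Qed.

Lemma Xpt_data l : Xpt q k v (rshift (n * (d + 1)) l) = (ktil k l, vtil v l).
Proof. by rewrite /Xpt (unsplitK (inr _)). Qed.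

Lemma Katt_rowE a :
  ((delta_mx a (0 : 'I_1))^T *m Katt q k v *m (@p_in R n d - @q_out R n d Iout)) 0 0 =
  \sum_(l < n) katt (Xpt q k v a) (ktil k l, vtil v l)
                 * (n%:R^-1 - (l \in Iout)%:R / #|Iout|%:R).
Proof.
rewrite trmx_delta -rowE mxE big_split_ord /= big1 ?add0r => [|b _].
  by apply: eq_bigr => l _; rewrite !mxE Xpt_data (unsplitK (inr _)) div1r.
by rewrite !mxE (unsplitK (inl _)) subrr mulr0.
Qed.

Lemma kernel_seminorm_query :
  kernel_seminorm (Katt q k v) (@p_in R n d - @q_out R n d Iout)
    (fun a : 'I_(Npts n d) => (a < n * (d + 1))%N) =
  \big[Num.max/0]_(i < n) \big[Num.max/0]_(j < d + 1)
     `| \sum_(l < n) katt (zpt q i j) (ktil k l, vtil v l)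
                 * (n%:R^-1 - (l \in Iout)%:R / #|Iout|%:R) |.
Proof.
rewrite /kernel_seminorm bigmax_split_ord.
rewrite [X in Num.max _ X]big_pred0 => [|l]; last by rewrite /= ltnNge leq_addr.
rewrite max_l ?bigmax_ge_id // (eq_bigl xpredT) => [|b]; last by rewrite /= ltn_ord.
rewrite (reindex (fun p : 'I_n * 'I_(d + 1) => mxvec_index p.1 p.2)) /=; last first.
  exists (fun b => enum_val (cast_ord (esym (mxvec_cast n (d + 1))) b)) => [[i j] _ | b _].
    by rewrite /mxvec_index cast_ordK enum_rankK.
  by rewrite /mxvec_index -surjective_pairing enum_valK cast_ordKV.
rewrite pair_bigA_idem; last exact: maxxx.
by apply: eq_bigr => -[i j] _; rewrite Katt_rowE Xpt_query.
Qed.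

End Attention.

Theorem lemmaF2 (R : realType) (n d : nat) (q k v : 'I_n -> 'rV[R]_d)
    (Iout : {set 'I_n}) (hout : (0 < #|Iout|)%N) :
  let A := attA q k in
  let Ah := attAhat q k Iout in
  let V := attV v in
  let LHS := Num.max (n%:R^-1 * mxmax ((Ah - A) *m V))
                     (n%:R^-1 * mxmax ((Ah - A) *m const_mx 1 : 'cV[R]_n) * mxmax V) in
  LHS = \big[Num.max/0]_(i < n) \big[Num.max/0]_(j < d + 1)
          `| \sum_(l < n) katt (zpt q i j) (ktil k l, vtil v l)
                 * (n%:R^-1 - (l \in Iout)%:R / (#|Iout|%:R)) |
  /\
  LHS = kernel_seminorm (Katt q k v) (@p_in R n d - @q_out R n d Iout)
          (fun a : 'I_(Npts n d) => (a < n * (d + 1))%N).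
Proof.
move=> A Ah V LHS.
have LHS_query : LHS = \big[Num.max/0]_(i < n) \big[Num.max/0]_(j < d + 1)
    `| \sum_(l < n) katt (zpt q i j) (ktil k l, vtil v l)
                 * (n%:R^-1 - (l \in Iout)%:R / (#|Iout|%:R)) |.
  by rewrite bigmax_sum_katt_query // mxmax_mul_attVtil maxr_pMr ?invr_ge0 ?ler0n // mulrA.
by split; rewrite // kernel_seminorm_query.
Qed.
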